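(* Consider the Geo-Geo system with parameters $\mu_A,\mu_B\in(0,1)$. Its average AoI is $$\overline{\Delta}_{\text{Geo-Geo}}(\mu_A,\mu_B)=\frac{2\big(\mu_A^2+\mu_B^2+3\mu_A\mu_B-3\mu_A^2\mu_B-3\mu_A\mu_B^2+2\mu_A^2\mu_B^2\big)}{(\mu_A+\mu_B-\mu_A\mu_B)^3}.$$
   Context: **Time and sensors.** Time is slotted. Two sensors independently send time-stamped status updates about the same process to one monitor under the zero-wait policy: a new update is generated at the start of the slot right after the previous update of that sensor is delivered, with instantaneous acknowledgements. In the Geo-Geo system, sensor A completes its current update in each slot independently with probability $\mu_A$, and sensor B does so independently with probability $\mu_B$. Thus both sensors have i.i.d. geometric service times on $\{1,2,\dots\}$, with parameters $\mu_A$ and $\mu_B$. **AoI.** The monitor's AoI is $\Delta[t]=t-u(t)$, where $u(t)$ is the generation time of the freshest received update. It evolves by - $\Delta[t+1]=\Delta[t]+1$ if nothing is delivered in slot $t$; - $\Delta[t+1]=\min(t-G_i+1,\Delta[t]+1)$ otherwise, with $G_i$ the generation time of the delivered update. Equivalently, the system AoI is the minimum of the AoIs that each single sensor's update stream alone would produce. The average AoI is its long-run time average in steady state. *)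

From HB Require Import structures.
From mathcomp Require Import all_boot all_order all_algebra.
From mathcomp Require Import all_classical all_reals all_analysis.
Set Implicit Arguments. Unset Strict Implicit. Unset Printing Implicit Defensive.
Import Order.TTheory GRing.Theory Num.Theory.

(* A realisation of the per-slot completion events:
   (c t).1 = sensor A completes its current update in slot t,
   (c t).2 = sensor B completes its current update in slot t. *)
Definition coins := nat -> bool * bool.

Section Dynamics.
Variable c : coins.
Definition compA t := (c t).1.
Definition compB t := (c t).2.

(* generation time (start of slot) of the update sensor A/B has in service
   during slot t.  Zero-wait: the first updates are generated at slot 0, and
   an update whose service completes at the end of slot t (hence is delivered
   in slot t+1) is immediately followed by a new update generated at slot t+1. *)
Fixpoint genA t := if t is t'.+1 then (if compA t' then t'.+1 else genA t') else 0%N.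
Fixpoint genB t := if t is t'.+1 then (if compB t' then t'.+1 else genB t') else 0%N.

(* Some G = an update generated at time G is delivered in slot t.  An update
   generated at G with geometric service time S (number of slots of service)
   is delivered in slot G + S. *)
Definition delivA t : option nat :=
  if t is t'.+1 then (if compA t' then Some (genA t') else None) else None.
Definition delivB t : option nat :=
  if t is t'.+1 then (if compB t' then Some (genB t') else None) else None.

Definition upd (t : nat) (o : option nat) (d : nat) : nat :=
  if o is Some G then minn (t - G + 1) d else d.

Fixpoint aoi t : nat :=
  if t is t'.+1 then upd t' (delivB t') (upd t' (delivA t') (aoi t').+1) else 0%N.
End Dynamics.

Local Open Scope ring_scope.

Definition pslot (R : realType) (muA muB : R) (b : bool * bool) : R :=
  (if b.1 then muA else 1 - muA) * (if b.2 then muB else 1 - muB).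

Definition ext (n : nat) (w : {ffun 'I_n -> bool * bool}) : coins :=
  fun i => if insub i is Some j then w j else (false, false).

(* E[Delta[t]]: Delta[t] only depends on the events of slots < t, and the
   events of distinct slots / sensors are independent. *)
Definition expected_aoi (R : realType) (muA muB : R) (t : nat) : R :=
  \sum_(w : {ffun 'I_t -> bool * bool})
     (\prod_(i < t) pslot muA muB (w i)) * (aoi (ext w) t)%:R.

Definition avg_aoi (R : realType) (muA muB : R) (T : nat) : R :=
  (T%:R)^-1 * \sum_(t < T) expected_aoi muA muB t.

From Pilot Require Import Defs.
From HB Require Import structures.
From mathcomp Require Import all_boot all_order all_algebra.
From mathcomp Require Import all_classical all_reals all_analysis.
From mathcomp Require Import zify ring lra.
Import Order.TTheory GRing.Theory Num.Theory.
Import numFieldNormedType.Exports.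
Set Implicit Arguments. Unset Strict Implicit. Unset Printing Implicit Defensive.

(* The system AoI is the minimum of the AoIs of the two update streams, and a
   single stream has age > k at time t exactly when it completed at most one
   update in the last k slots: under zero wait, delivering an update generated
   inside the window takes a completion to start it and another to finish it.
   Summing over k, Delta[t] = sum_(k < t) [A has <= 1 completion in the window]
   * [B has <= 1 completion in the window].  The two sensors are independent,
   and a stream completes at most one of k updates with probability
   (1 - mu)^k + k mu (1 - mu)^(k-1), so E[Delta[t]] is a partial sum of
   p^k (1 + v k + w k^2) with p = (1 - muA)(1 - muB).  This converges to the
   stated value, and Cesaro's theorem passes the limit to the time average. *)

Fixpoint gen1 (f : nat -> bool) t :=
  if t is t'.+1 then (if f t' then t'.+1 else gen1 f t') else 0%N.

Definition deliv1 (f : nat -> bool) t : option nat :=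
  if t is t'.+1 then (if f t' then Some (gen1 f t') else None) else None.

Fixpoint aoi1 (f : nat -> bool) t : nat :=
  if t is t'.+1 then upd t' (deliv1 f t') (aoi1 f t').+1 else 0%N.

Lemma genAE c t : genA c t = gen1 (Defs.compA c) t.
Proof. by elim: t => //= t ->. Qed.

Lemma genBE c t : genB c t = gen1 (Defs.compB c) t.
Proof. by elim: t => //= t ->. Qed.

Lemma delivAE c t : delivA c t = deliv1 (Defs.compA c) t.
Proof. by case: t => //= t; rewrite genAE. Qed.

Lemma delivBE c t : delivB c t = deliv1 (Defs.compB c) t.
Proof. by case: t => //= t; rewrite genBE. Qed.

Lemma upd_minnl t o x y : upd t o (minn x y) = minn (upd t o x) y.
Proof. by case: o => //= G; rewrite minnA. Qed.

Lemma upd_minnr t o x y : upd t o (minn x y) = minn x (upd t o y).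
Proof. by rewrite minnC upd_minnl minnC. Qed.

Lemma aoi_minn c t :
  aoi c t = minn (aoi1 (Defs.compA c) t) (aoi1 (Defs.compB c) t).
Proof.
elim: t => //= t IH.
by rewrite IH -minnSS upd_minnl upd_minnr delivAE delivBE.
Qed.

Lemma gen1_le f t : (gen1 f t <= t)%N.
Proof. by elim: t => //= t IH; case: (f t); rewrite // ltnW. Qed.

Lemma gen1_leE f t m : (m <= t)%N ->
  (gen1 f t <= m)%N = (\sum_(m <= i < t) f i == 0)%N.
Proof.
elim: t => [|t IH] mt; first by rewrite leqn0 in mt; rewrite (eqP mt) big_geq.
rewrite leq_eqVlt in mt; case/predU1P: mt => [->|mt].
  by rewrite gen1_le big_geq.
rewrite big_nat_recr //=; case: (f t).
  by rewrite addn1 ltnNge -ltnS mt.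
by rewrite addn0 IH.
Qed.

Lemma ltn_upd t o d k : (k < upd t o d)%N =
  (k < d)%N && (if o is Some G then (k < t - G + 1)%N else true).
Proof. by case: o => [G|] /=; rewrite ?andbT // leq_min andbC. Qed.

Lemma ltn_aoi1 f t k : (k < aoi1 f t)%N =
  (k < t)%N && (\sum_(t.-1 - k <= i < t.-1) f i <= 1)%N.
Proof.
elim: t k => [|t IH] [|k] //=; rewrite ltn_upd.
  by case: (deliv1 f t) => [G|]; rewrite subn0 big_geq ?addn1.
rewrite !ltnS; case: t IH => [|s] IH //=.
rewrite IH subSS big_nat_recr ?leq_subr //=.
have [ks|sk] := leqP k s; last by rewrite ltnS leqNgt sk.
rewrite ltnS ks /=; case: (f s); rewrite ?addn0 ?andbT //.
have -> : (k.+1 < s.+1 - gen1 f s + 1)%N = (gen1 f s <= s - k)%N.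
  by have := gen1_le f s; lia.
rewrite gen1_leE ?leq_subr // addn1 ltnS leqn0.
by case: eqP => [->|]; rewrite ?andbF.
Qed.

Lemma aoi_le c t : (aoi c t <= t)%N.
Proof. by rewrite leqNgt aoi_minn leq_min ltn_aoi1 (ltnn t). Qed.

Lemma sum_ltn_minn n t : (\sum_(k < t) (k < n) = minn t n)%N.
Proof. by elim: t => [|t IH]; rewrite ?big_ord0 ?min0n // big_ord_recr /= IH; lia. Qed.

(* Completions in slots t-1-k, ..., t-2 are those delivered in the k slots
   before t. *)
Definition window t k : {set 'I_t} := [set i : 'I_t | (t.-1 - k <= i < t.-1)%N].

Lemma big_nat_window (F : nat -> nat) t k : (k < t)%N ->
  (\sum_(t.-1 - k <= i < t.-1) F i = \sum_(i in window t k) F i)%N.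
Proof.
move=> kt; rewrite (big_nat_widen _ _ _ _ _ (leq_pred t)).
rewrite (big_nat_widenl _ _ _ _ _ (leq0n _)) big_mkord.
by apply: eq_bigl => i; rewrite inE andbC.
Qed.

Lemma card_window t k : (k < t)%N -> #|window t k| = k.
Proof.
move=> kt; rewrite -sum1_card.
have /= := @big_nat_window (fun=> 1%N) t k kt.
by rewrite sum_nat_const_nat muln1 => <-; lia.
Qed.

Lemma aoi_window_sum c t : aoi c t = (\sum_(k < t)
  ((\sum_(i in window t k) Defs.compA c i <= 1) &&
   (\sum_(i in window t k) Defs.compB c i <= 1)))%N.
Proof.
rewrite -[LHS](minn_idPr (aoi_le c t)) -sum_ltn_minn; apply: eq_bigr => k _.
by rewrite aoi_minn leq_min !ltn_aoi1 ltn_ord !big_nat_window.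
Qed.

Lemma prodn_bool (I : finType) (P : pred I) (b : I -> bool) :
  (\prod_(i | P i) b i = [forall (i | P i), b i])%N.
Proof.
rewrite -big_andE.
by rewrite (big_morph nat_of_bool (id2 := true) (fun x y => esym (mulnb x y)) (erefl 1%N)).
Qed.

Lemma at_most_one_indicator (I : finType) (W : pred I) (u : I -> bool) :
  ((\sum_(i in W) u i <= 1) : nat) = (\prod_(i in W) ~~ u i
    + \sum_(j in W) \prod_(i in W) (if i == j then u i else ~~ u i))%N.
Proof.
have prod_neg (P : pred I) : (\prod_(i | P i) ~~ u i = (\sum_(i | P i) u i == 0))%N.
  rewrite prodn_bool sum_nat_eq0; congr nat_of_bool.
  by apply: eq_forallb => i; case: (u i).
set n := (\sum_(i in W) u i)%N.
have term j : j \in W ->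
    (\prod_(i in W) (if i == j then u i else ~~ u i) = u j * (n == 1))%N.
  move=> Wj; have -> : n = (u j + \sum_(i in W | i != j) u i)%N by rewrite /n (bigD1 j).
  rewrite (bigD1 j) //= eqxx.
  rewrite (eq_bigr (fun i => (~~ u i : nat))) => [|i /andP[_ /negbTE ->] //].
  by rewrite prod_neg; case: (u j); rewrite ?mul0n ?mul1n // add1n eqSS.
rewrite (eq_bigr _ term) -big_distrl /= -/n prod_neg -/n.
by clear term; case: n => [|[|m]]; rewrite ?muln0.
Qed.

Local Open Scope classical_set_scope.
Local Open Scope ring_scope.

Section ProductExpectation.
Variable R : comPzRingType.

Definition bern (c : R) (x : bool) : R := if x then c else 1 - c.

Definition binom_le1 (c : R) (k : nat) : R :=
  (1 - c) ^+ k + k%:R * c * (1 - c) ^+ k.-1.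

Lemma expect_prod (I T : finType) (p : T -> R) (P : pred I) (g : I -> T -> R) :
  \sum_x p x = 1 ->
  \sum_(w : {ffun I -> T}) (\prod_i p (w i)) * \prod_(i | P i) g i (w i)
  = \prod_(i | P i) \sum_x p x * g i x.
Proof.
move=> p1; rewrite [RHS]big_mkcond /=.
have -> : \prod_i (if P i then \sum_x p x * g i x else 1)
    = \prod_i \sum_x p x * (if P i then g i x else 1).
  by apply: eq_bigr => i _; case: (P i); under eq_bigr do rewrite ?mulr1.
rewrite bigA_distr_bigA /=; apply: eq_bigr => w _.
by rewrite big_split /= -big_mkcond.
Qed.

Lemma expect_pair (I T1 T2 : finType) (p1 : T1 -> R) (p2 : T2 -> R)
    (F : {ffun I -> T1} -> R) (G : {ffun I -> T2} -> R) :
  \sum_(w : {ffun I -> T1 * T2}) (\prod_i (p1 (w i).1 * p2 (w i).2)) *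
     (F [ffun i => (w i).1] * G [ffun i => (w i).2])
  = (\sum_(u : {ffun I -> T1}) (\prod_i p1 (u i)) * F u) *
    (\sum_(v : {ffun I -> T2}) (\prod_i p2 (v i)) * G v).
Proof.
pose zipf (uv : {ffun I -> T1} * {ffun I -> T2}) : {ffun I -> T1 * T2} :=
  [ffun i => (uv.1 i, uv.2 i)].
pose unzipf (w : {ffun I -> T1 * T2}) : {ffun I -> T1} * {ffun I -> T2} :=
  ([ffun i => (w i).1], [ffun i => (w i).2]).
have zipf_bij : bijective zipf.
  exists unzipf.
    by case=> u v; congr pair; apply/ffunP => i; rewrite !ffunE.
  by move=> w; apply/ffunP => i; rewrite !ffunE; case: (w i).
rewrite (reindex zipf) /=; last exact: onW_bij.
rewrite mulr_suml; under [RHS]eq_bigr do rewrite mulr_sumr.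
rewrite pair_bigA /=; apply: eq_bigr => -[u v] _ /=.
have -> : [ffun i => (zipf (u, v) i).1] = u by apply/ffunP => i; rewrite !ffunE.
have -> : [ffun i => (zipf (u, v) i).2] = v by apply/ffunP => i; rewrite !ffunE.
under eq_bigr do rewrite ffunE /=.
by rewrite big_split /=; ring.
Qed.

Lemma expect_at_most_one (I : finType) (W : pred I) (c : R) :
  \sum_(u : {ffun I -> bool}) (\prod_i bern c (u i)) *
     ((\sum_(i in W) u i <= 1)%N : nat)%:R
  = binom_le1 c #|W|.
Proof.
have bern1 : \sum_x bern c x = 1 by rewrite big_bool /= addrC subrK.
have bern_negb : \sum_x bern c x * (~~ x : nat)%:R = 1 - c.
  by rewrite big_bool /= mulr0 mulr1 add0r.
have bern_id : \sum_x bern c x * (x : nat)%:R = c.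
  by rewrite big_bool /= mulr0 mulr1 addr0.
have single j : j \in W -> \prod_(i in W)
    \sum_x bern c x * ((if i == j then x else ~~ x) : nat)%:R = c * (1 - c) ^+ #|W|.-1.
  move=> Wj; rewrite (bigD1 j) //= eqxx bern_id (cardD1 j) Wj /=.
  rewrite (eq_bigr (fun=> 1 - c)) => [|i /andP[_ /negbTE ->] //].
  by rewrite -prodr_const; congr (_ * _); apply: eq_bigl => i; rewrite !inE andbC.
rewrite /binom_le1.
under eq_bigr do rewrite at_most_one_indicator natrD mulrDr natr_sum mulr_sumr.
rewrite big_split /=; under eq_bigr do rewrite natr_prod.
rewrite (expect_prod _ (fun _ x => (~~ x : nat)%:R)) //.
rewrite (eq_bigr _ (fun _ _ => bern_negb)) prodr_const.
rewrite exchange_big /=; congr (_ + _).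
under eq_bigr => j Wj.
  under eq_bigr do rewrite natr_prod.
  rewrite (expect_prod _ (fun i x => ((if i == j then x else ~~ x) : nat)%:R)) //.
  rewrite single //.
  over.
by rewrite sumr_const mulr_natl mulrnAl.
Qed.

End ProductExpectation.

Lemma binom_le1E (R : fieldType) (c : R) k : 1 - c != 0 ->
  binom_le1 c k = (1 - c) ^+ k * (1 + k%:R * (c / (1 - c))).
Proof.
by move=> q0; rewrite /binom_le1; case: k => [|k] /=; [ring | rewrite exprS; field].
Qed.

Lemma ext_ord t (w : {ffun 'I_t -> bool * bool}) (i : 'I_t) : ext w i = w i.
Proof. by rewrite /ext valK. Qed.

Lemma expected_aoiE (R : realType) (a b : R) t :
  expected_aoi a b t = \sum_(k < t) binom_le1 a k * binom_le1 b k.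
Proof.
rewrite /expected_aoi.
under eq_bigr do rewrite aoi_window_sum natr_sum mulr_sumr.
rewrite exchange_big /=; apply: eq_bigr => k _.
pose le1 (u : {ffun 'I_t -> bool}) : R :=
  ((\sum_(i in window t k) u i <= 1)%N : nat)%:R.
under eq_bigr => w _.
  have -> : (\sum_(i in window t k) Defs.compA (ext w) i
            = \sum_(i in window t k) [ffun i => (w i).1] i)%N.
    by apply: eq_bigr => i _; rewrite ffunE /Defs.compA ext_ord.
  have -> : (\sum_(i in window t k) Defs.compB (ext w) i
            = \sum_(i in window t k) [ffun i => (w i).2] i)%N.
    by apply: eq_bigr => i _; rewrite ffunE /Defs.compB ext_ord.
  rewrite -mulnb natrM -/(le1 _) -/(le1 _).
  over.
rewrite (expect_pair (bern a) (bern b) le1 le1).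
by rewrite !expect_at_most_one card_window.
Qed.

Lemma natr_mul_expr_le (R : realFieldType) (s : R) n : 0 <= s -> s < 1 ->
  n%:R * s ^+ n <= (1 - s)^-1.
Proof.
move=> s0 s1; have q0 : 0 < 1 - s by rewrite subr_gt0.
rewrite -(ler_pM2l q0) mulfV ?gt_eqF //.
have le_sum : n%:R * s ^+ n <= \sum_(i < n) s ^+ i.
  rewrite mulr_natl -[n in _ *+ n]card_ord -sumr_const; apply: ler_sum => i _.
  by apply: ler_wiXn2l => //; [exact: ltW | exact: ltnW].
have geom : (1 - s) * \sum_(i < n) s ^+ i = 1 - s ^+ n.
  by rewrite -opprB mulNr -subrX1 opprB.
have := ler_wpM2l (ltW q0) le_sum; rewrite geom.
have : 0 <= s ^+ n by exact: exprn_ge0.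
lra.
Qed.

Section PolyGeometric.
Variable R : realType.

Lemma cvg_natr_mul_expr (s : R) : 0 <= s -> s < 1 ->
  (fun n : nat => n%:R * s ^+ n) @ \oo --> 0.
Proof.
move=> s0 s1; pose r := Num.sqrt s.
have r0 : 0 <= r by exact: sqrtr_ge0.
have r1 : r < 1 by rewrite -sqrtr1 ltr_sqrt.
have rs : r ^+ 2 = s by exact: sqr_sqrtr.
apply: (@squeeze_cvgr _ _ _ _ (fun=> 0) (fun n => (1 - r)^-1 * r ^+ n)).
- near=> n; rewrite -rs -exprM mulnC exprM expr2 mulrA.
  apply/andP; split; first by rewrite !mulr_ge0 ?exprn_ge0.
  by rewrite ler_wpM2r ?exprn_ge0 ?natr_mul_expr_le.
- exact: cvg_cst.
- by rewrite -(mulr0 (1 - r)^-1); apply: cvgMl_tmp; apply: cvg_expr; rewrite ger0_norm.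
Unshelve. all: by end_near.
Qed.

Lemma cvg_sqr_natr_mul_expr (s : R) : 0 <= s -> s < 1 ->
  (fun n : nat => n%:R ^+ 2 * s ^+ n) @ \oo --> 0.
Proof.
move=> s0 s1; pose r := Num.sqrt s.
have r0 : 0 <= r by exact: sqrtr_ge0.
have r1 : r < 1 by rewrite -sqrtr1 ltr_sqrt.
have rs : r ^+ 2 = s by exact: sqr_sqrtr.
have -> : (fun n : nat => n%:R ^+ 2 * s ^+ n)
    = (fun n => n%:R * r ^+ n) \* (fun n => n%:R * r ^+ n).
  by apply: funext => n /=; rewrite -rs -exprM mulnC exprM; ring.
by rewrite -(mulr0 0); apply: cvgM; exact: cvg_natr_mul_expr.
Qed.

Lemma cvg_sum_geometric_quadratic (p u v w : R) : 0 <= p -> p < 1 ->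
  (fun t : nat => \sum_(k < t) p ^+ k * (u + v * k%:R + w * k%:R ^+ 2)) @ \oo -->
  u / (1 - p) + v * p / (1 - p) ^+ 2 + w * p * (1 + p) / (1 - p) ^+ 3.
Proof.
move=> p0 p1; have q0 : 1 - p != 0 by rewrite subr_eq0 eq_sym lt_eqF.
pose C := w / (1 - p); pose B := (v + 2 * p * C) / (1 - p).
pose A := (u + p * (B + C)) / (1 - p).
have partial t : \sum_(k < t) p ^+ k * (u + v * k%:R + w * k%:R ^+ 2)
    = A - (A * p ^+ t + B * (t%:R * p ^+ t) + C * (t%:R ^+ 2 * p ^+ t)).
  elim: t => [|t IH]; first by rewrite big_ord0; ring.
  rewrite big_ord_recr /= IH /A /B /C [p ^+ t.+1]exprSr -[t.+1%:R]natr1.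
  by field; exact: q0.
rewrite [X in _ --> X](_ : _ = A - (A * 0 + B * 0 + C * 0)); last first.
  by rewrite /A /B /C; field; exact: q0.
under eq_fun do rewrite partial.
apply: cvgB; first exact: cvg_cst.
apply: cvgD; first apply: cvgD; apply: cvgMl_tmp.
- by apply: cvg_expr; rewrite ger0_norm.
- exact: cvg_natr_mul_expr.
- exact: cvg_sqr_natr_mul_expr.
Qed.

End PolyGeometric.

Lemma avg_aoiS (R : realType) (a b : R) :
  (fun n => avg_aoi a b n.+1) = arithmetic_mean (expected_aoi a b).
Proof. by apply: funext => n; rewrite /avg_aoi /arithmetic_mean /= seriesEord. Qed.

Theorem lemma2 (R : realType) (muA muB : R)
  (hA : 0 < muA < 1) (hB : 0 < muB < 1) :
  avg_aoi muA muB @ \oo -->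
    ((2 * (muA ^+ 2 + muB ^+ 2 + 3 * muA * muB - 3 * muA ^+ 2 * muB
          - 3 * muA * muB ^+ 2 + 2 * muA ^+ 2 * muB ^+ 2))
    / (muA + muB - muA * muB) ^+ 3 : R).
Proof.
have /andP [a0 a1] := hA; have /andP [b0 b1] := hB.
have qa : 1 - muA != 0 by rewrite subr_eq0 eq_sym lt_eqF.
have qb : 1 - muB != 0 by rewrite subr_eq0 eq_sym lt_eqF.
have s0 : muA + muB - muA * muB != 0 by rewrite gt_eqF //; nra.
pose p := (1 - muA) * (1 - muB).
have p0 : 0 <= p by rewrite mulr_ge0 // subr_ge0 ltW.
have p1 : p < 1 by rewrite /p; nra.
pose v := muA / (1 - muA) + muB / (1 - muB); pose w := muA * muB / p.
have expectedE : expected_aoi muA muB =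
    fun t => \sum_(k < t) p ^+ k * (1 + v * k%:R + w * k%:R ^+ 2).
  apply: funext => t; rewrite expected_aoiE; apply: eq_bigr => k _.
  by rewrite !binom_le1E // /v /w /p exprMn; field; rewrite qa qb.
have := cvg_sum_geometric_quadratic (u := 1) (v := v) (w := w) p0 p1.
rewrite -expectedE [X in _ --> X -> _](_ : _ = (2 * (muA ^+ 2 + muB ^+ 2
    + 3 * muA * muB - 3 * muA ^+ 2 * muB - 3 * muA * muB ^+ 2
    + 2 * muA ^+ 2 * muB ^+ 2)) / (muA + muB - muA * muB) ^+ 3); last first.
  by rewrite /v /w /p; field; rewrite qa qb s0.
by move/cesaro; rewrite -avg_aoiS cvg_shiftS.
Qed.
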